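(* For each $\lambda\in\Lambda$, $(Q_\lambda,B)$ is a polynomial-like map of degree $p+1$: $Q_\lambda(B)$ is a ball strictly containing $B$, and for every $w\in Q_\lambda(B)$ the equation $Q_\lambda(z)=w$ has exactly $p+1$ solutions in $B$, counted with multiplicity.
   Context: Let $p$ be a prime, $\mathbb C_p$ with $p$-adic absolute value, $|p|=1/p$. $\Lambda=\{\lambda\in\mathbb C_p:|\lambda-1|<1\}$, $P_\lambda(z)=\frac{\lambda}{p}z^p+\left(1-\frac{\lambda}{p}\right)z^{p+1}$, $\rho=p^{-1/(p-1)}$. Fix $\hat r\in|\mathbb C_p^*|$, $\hat r>1$, $B=\{z:|z|\le\hat r\}$; $\mathcal H(B)$ is the ring of power series $\sum a_iz^i$ convergent on $B$ with norm $\|f\|_B=\sup_i|a_i|\hat r^{\,i}$. Fix $Q\in\mathcal H(B)$ with $\|Q\|_B<\rho$, $Q^*_\lambda=P_\lambda+Q$, and let $h(\lambda)$ be the unique fixed point of $Q^*_\lambda$ in $\{z:|z-1|\le|Q(1)|/p\}$. Define $Q_\lambda(z)=P_\lambda(z+h(\lambda)-1)+Q(z+h(\lambda)-1)+1-h(\lambda)$ for $z\in B$. *)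

(* K is an abstract algebraically closed field (closedFieldType)
   with an absolute value into a realType R; hypotheses [is_Cp] pin K down as C_p. *)
From HB Require Import structures.
From mathcomp Require Import all_boot all_order all_algebra.
From mathcomp Require Import reals exp.
From Stdlib Require Import ClassicalEpsilon.
Set Implicit Arguments. Unset Strict Implicit. Unset Printing Implicit Defensive.
Import Order.TTheory GRing.Theory Num.Theory.
Local Open Scope ring_scope.

Section Padic.
Variables (R : realType) (K : closedFieldType) (abs : K -> R).

Definition algebraic_over_Q (y : K) : Prop :=
  exists q : {poly int}, q != 0 /\ root (map_poly (fun z : int => z%:~R) q) y.

(* (K, abs) is (a copy of) C_p: a complete, algebraically closed, non-archimedean
   valued field with |p| = 1/p in which the algebraic numbers are dense
   (i.e. the completion of an algebraic closure of Q_p). *)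
Definition is_Cp (p : nat) : Prop :=
  (forall x, 0 <= abs x) /\
      (forall x, abs x = 0 <-> x = 0) /\
      (forall x y, abs (x * y) = abs x * abs y) /\
      (forall x y, abs (x + y) <= Num.max (abs x) (abs y)) /\
      abs (p%:R) = (p%:R)^-1 /\
      (forall u : nat -> K,
         (forall eps, 0 < eps -> exists N, forall m n, (N <= m)%N -> (N <= n)%N ->
            abs (u m - u n) < eps) ->
         exists l, forall eps, 0 < eps -> exists N, forall n, (N <= n)%N -> abs (u n - l) < eps) /\
      (forall x eps, 0 < eps -> exists y, algebraic_over_Q y /\ abs (x - y) < eps).

Definition series_to (u : nat -> K) (s : K) : Prop :=
  forall eps, 0 < eps -> exists N, forall n, (N <= n)%N ->
    abs (\sum_(i < n) u i - s) < eps.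

Definition pseval (a : nat -> K) (z : K) : K :=
  epsilon (inhabits 0) (fun s => series_to (fun i => a i * z ^+ i) s).

(* a belongs to H(B), B = closed ball of radius r: |a_i| r^i -> 0 *)
Definition in_H (r : R) (a : nat -> K) : Prop :=
  forall eps, 0 < eps -> exists N, forall i, (N <= i)%N -> abs (a i) * r ^+ i < eps.

Definition rho (p : nat) : R := powR (p%:R) (- (p%:R - 1)^-1).

Definition Plam (p : nat) (lam z : K) : K :=
  lam / p%:R * z ^+ p + (1 - lam / p%:R) * z ^+ p.+1.

Definition Qstar (p : nat) (Q : nat -> K) (lam z : K) : K :=
  Plam p lam z + pseval Q z.

Definition Qlam (p : nat) (Q : nat -> K) (lam h z : K) : K :=
  Plam p lam (z + h - 1) + pseval Q (z + h - 1) + 1 - h.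

Definition mult_at (f : K -> K) (z0 : K) (m : nat) : Prop :=
  exists L, L != 0 /\ forall eps, 0 < eps -> exists del, 0 < del /\
    forall z, z != z0 -> abs (z - z0) < del -> abs (f z / (z - z0) ^+ m - L) < eps.

End Padic.

(* Put z = 1 - h + x t with |x| = rhat, so that z ranges over B exactly when t ranges
   over the closed unit disc.  Write Q*_lam(u) = sum a_i u^i.  Since |lam| = 1 and
   |p| = 1/p, the coefficient a_(p+1) = 1 - lam/p + Q_(p+1) has absolute value p,
   while |a_i| rhat^i <= p rhat^(p+1) for every i.  Hence for
   |w - (Q_0 + 1 - h)| <= p rhat^(p+1) the power series (Q_lam(z) - w) / (a_(p+1) x^(p+1))
   in t has coefficients of absolute value <= 1, the one of t^(p+1) of absolute value 1
   and all later ones uniformly < 1.  By non-archimedean Weierstrass preparation such a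
   series is (t - t_1) ... (t - t_(p+1)) U(t) with |t_j| <= 1 and |U| = 1 on the disc;
   its roots are obtained as limits of roots of the truncated polynomials, each one
   chosen closest to the previous one.  This gives the p + 1 preimages with
   multiplicity, and shows that Q_lam(B) is the closed ball of radius p rhat^(p+1) > rhat
   around Q_0 + 1 - h, which contains B. *)

From HB Require Import structures.
From mathcomp Require Import all_boot all_order all_algebra.
From mathcomp Require Import reals exp.
From Stdlib Require Import ClassicalEpsilon.
From mathcomp Require Import ring.
Set Implicit Arguments. Unset Strict Implicit. Unset Printing Implicit Defensive.
Import Order.TTheory GRing.Theory Num.Theory.
Local Open Scope ring_scope.

Section Ultrametric.
Variables (R : realType) (K : closedFieldType) (abs : K -> R).
Hypothesis abs_ge0 : forall x, 0 <= abs x.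
Hypothesis abs_eq0 : forall x, abs x = 0 <-> x = 0.
Hypothesis absM : forall x y, abs (x * y) = abs x * abs y.
Hypothesis absD_max : forall x y, abs (x + y) <= Num.max (abs x) (abs y).

Lemma abs0 : abs 0 = 0. Proof. exact/abs_eq0. Qed.

Lemma abs_gt0 x : x != 0 -> 0 < abs x.
Proof. by move=> nx; rewrite lt_neqAle abs_ge0 andbT eq_sym; apply/eqP => /abs_eq0; apply/eqP. Qed.

Lemma abs1 : abs 1 = 1.
Proof.
have e := absM 1 1; rewrite mulr1 in e.
have : abs 1 * (abs 1 - 1) = 0 by rewrite mulrBr mulr1 -e subrr.
by move/eqP; rewrite mulf_eq0 subr_eq0 (gt_eqF (abs_gt0 (oner_neq0 K))) => /eqP.
Qed.

Lemma absN1 : abs (-1) = 1.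
Proof.
have e := absM (-1) (-1); rewrite mulrNN mulr1 abs1 in e.
have : (abs (-1) - 1) * (abs (-1) + 1) = 0 by rewrite -subr_sqr expr2 -e expr1n subrr.
move/eqP; rewrite mulf_eq0 subr_eq0 => /orP [/eqP //|].
by rewrite addr_eq0 => /eqP e1; have := abs_ge0 (-1); rewrite e1 oppr_ge0 ler10.
Qed.

Lemma absN x : abs (- x) = abs x.
Proof. by rewrite -mulN1r absM absN1 mul1r. Qed.

Lemma absX x n : abs (x ^+ n) = abs x ^+ n.
Proof. by elim: n => [|n IH]; rewrite ?expr0 ?abs1 // !exprS absM IH. Qed.

Lemma absV x : abs x^-1 = (abs x)^-1.
Proof.
have [->|nx] := eqVneq x 0; first by rewrite invr0 abs0 invr0.
apply: (@mulfI _ (abs x)); first by rewrite gt_eqF ?abs_gt0.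
by rewrite -absM !mulfV ?abs1 // gt_eqF ?abs_gt0.
Qed.

Lemma absD_le x y M : abs x <= M -> abs y <= M -> abs (x + y) <= M.
Proof. by move=> hx hy; apply: le_trans (absD_max x y) _; rewrite ge_max hx hy. Qed.

Lemma absD_lt x y M : abs x < M -> abs y < M -> abs (x + y) < M.
Proof. by move=> hx hy; apply: le_lt_trans (absD_max x y) _; rewrite gt_max hx hy. Qed.

Lemma absB_le x y M : abs x <= M -> abs y <= M -> abs (x - y) <= M.
Proof. by move=> hx hy; apply: absD_le; rewrite ?absN. Qed.

Lemma absB_lt x y M : abs x < M -> abs y < M -> abs (x - y) < M.
Proof. by move=> hx hy; apply: absD_lt; rewrite ?absN. Qed.

Lemma abs_isosceles x y : abs y < abs x -> abs (x + y) = abs x.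
Proof.
move=> yx; apply/eqP; rewrite eq_le absD_le ?(ltW yx) //= leNgt; apply/negP => lt_xy.
by have := absB_lt lt_xy yx; rewrite addrK ltxx.
Qed.

Lemma abs_eq0_small x : (forall eps, 0 < eps -> abs x < eps) -> x = 0.
Proof. by move=> small; apply/eqP/negPn/negP => /abs_gt0 /small; rewrite ltxx. Qed.

Lemma absM_le1 x y : abs x <= 1 -> abs y <= 1 -> abs (x * y) <= 1.
Proof. by move=> hx hy; rewrite absM mulr_ile1. Qed.

Lemma absM_lt1 x y : abs x < 1 -> abs y <= 1 -> abs (x * y) < 1.
Proof. by move=> hx hy; rewrite absM; apply: le_lt_trans hx; rewrite ler_piMr. Qed.

Lemma abs_sum_le (I : Type) (s : seq I) (P : pred I) (F : I -> K) M :
  0 <= M -> (forall i, P i -> abs (F i) <= M) -> abs (\sum_(i <- s | P i) F i) <= M.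
Proof.
by move=> M0 hF; elim/big_rec: _ => [|i y Pi hy]; rewrite ?abs0 // absD_le ?hF.
Qed.

Lemma abs_sum_lt (I : Type) (s : seq I) (P : pred I) (F : I -> K) M :
  0 < M -> (forall i, P i -> abs (F i) < M) -> abs (\sum_(i <- s | P i) F i) < M.
Proof.
by move=> M0 hF; elim/big_rec: _ => [|i y Pi hy]; rewrite ?abs0 // absD_lt ?hF.
Qed.

Lemma abs_sum_dominant n (F : nat -> K) j : (j < n)%N -> 0 < abs (F j) ->
  (forall i, (i < n)%N -> i != j -> abs (F i) < abs (F j)) ->
  abs (\sum_(i < n) F i) = abs (F j).
Proof.
move=> jn Fj_gt0 dom; rewrite (bigD1 (Ordinal jn)) //= abs_isosceles //.
apply: abs_sum_lt => // i ij; apply: dom => //; apply: contraNneq ij => eij; exact/val_inj.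
Qed.

Lemma abs_prod (I : Type) (s : seq I) (P : pred I) (F : I -> K) :
  abs (\prod_(i <- s | P i) F i) = \prod_(i <- s | P i) abs (F i).
Proof. by elim/big_rec2: _ => [|i y a Pi <-]; rewrite ?abs1 ?absM. Qed.

Lemma absXB_le t s i : abs t <= 1 -> abs s <= 1 -> abs (t ^+ i - s ^+ i) <= abs (t - s).
Proof.
move=> ht hs; rewrite subrXX absM ler_piMr // abs_sum_le // => j _.
by rewrite absM !absX mulr_ile1 ?exprn_ge0 ?exprn_ile1.
Qed.

Lemma absMB_le a b a' b' e : abs a <= 1 -> abs b' <= 1 ->
  abs (a - a') <= e -> abs (b - b') <= e -> abs (a * b - a' * b') <= e.
Proof.
move=> ha hb' haa hbb; have -> : a * b - a' * b' = a * (b - b') + (a - a') * b' by ring.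
apply: absD_le; rewrite absM.
  by apply: le_trans hbb; rewrite ler_piMl.
by apply: le_trans haa; rewrite ler_piMr.
Qed.

(** * Convergence and series *)

Definition vanishing (u : nat -> K) :=
  forall eps, 0 < eps -> exists N, forall i, (N <= i)%N -> abs (u i) < eps.

Definition converges_to (u : nat -> K) (l : K) :=
  forall eps, 0 < eps -> exists N, forall n, (N <= n)%N -> abs (u n - l) < eps.

Definition cauchy_seq (u : nat -> K) :=
  forall eps, 0 < eps -> exists N, forall m n, (N <= m)%N -> (N <= n)%N ->
    abs (u m - u n) < eps.

Lemma partial_sumB (u : nat -> K) n m : (n <= m)%N ->
  \sum_(i < m) u i - \sum_(i < n) u i = \sum_(n <= i < m) u i.
Proof.
move=> nm; rewrite -!(big_mkord xpredT) (@big_cat_nat _ _ _ n 0 m _ _ (leq0n n) nm) /=.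
by rewrite addrAC subrr add0r.
Qed.

Lemma abs_partial_sumB_le (u : nat -> K) n m M : (n <= m)%N -> 0 <= M ->
  (forall i, (n <= i)%N -> abs (u i) <= M) ->
  abs (\sum_(i < m) u i - \sum_(i < n) u i) <= M.
Proof.
move=> nm M0 hu; rewrite partial_sumB // big_nat_cond.
by apply: abs_sum_le => // i /andP [/andP [ni _] _]; apply: hu.
Qed.

Lemma abs_partial_sumB_lt (u : nat -> K) n m M : (n <= m)%N -> 0 < M ->
  (forall i, (n <= i)%N -> abs (u i) < M) ->
  abs (\sum_(i < m) u i - \sum_(i < n) u i) < M.
Proof.
move=> nm M0 hu; rewrite partial_sumB // big_nat_cond.
by apply: abs_sum_lt => // i /andP [/andP [ni _] _]; apply: hu.
Qed.

Lemma closed_ball_lim (v : nat -> K) l a k M :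
  (forall n, (k <= n)%N -> abs (v n - a) <= M) -> converges_to v l -> abs (l - a) <= M.
Proof.
move=> hv cvg_v; rewrite leNgt; apply/negP => lt_M.
have [N hN] := cvg_v (abs (l - a) - M) ltac:(by rewrite subr_gt0).
pose n := maxn N k.
have near_l : abs (v n - l) < abs (l - a).
  apply: lt_le_trans (hN n (leq_maxl _ _)) _.
  by rewrite gerBl (le_trans (abs_ge0 _) (hv n (leq_maxr _ _))).
have near_a : abs (v n - a) < abs (l - a) by apply: le_lt_trans (hv n (leq_maxr _ _)) lt_M.
have e : v n - a - (v n - l) = l - a by ring.
by have := absB_lt near_a near_l; rewrite e ltxx.
Qed.

Hypothesis complete : forall u, cauchy_seq u -> exists l, converges_to u l.

Lemma series_exists u : vanishing u -> exists s, series_to abs u s.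
Proof.
move=> u0; apply: complete => eps eps_gt0; have [N hN] := u0 _ eps_gt0; exists N => m n Nm Nn.
have [nm|mn] := leqP n m.
  by apply: abs_partial_sumB_lt => // i ni; apply/hN/(leq_trans Nn).
rewrite -absN opprB; apply: abs_partial_sumB_lt (ltnW mn) _ _ => // i mi.
exact/hN/(leq_trans Nm).
Qed.

Lemma series_unique u s t : series_to abs u s -> series_to abs u t -> s = t.
Proof.
move=> hs ht; apply/eqP; rewrite -subr_eq0; apply/eqP/abs_eq0_small => eps eps_gt0.
have [N1 h1] := hs _ eps_gt0; have [N2 h2] := ht _ eps_gt0.
rewrite -(subrKA (\sum_(i < maxn N1 N2) u i)) addrC -opprB.
by apply: absB_lt; [apply: h2; exact: leq_maxr | apply: h1; exact: leq_maxl].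
Qed.

Lemma pseval_eq a z s : series_to abs (fun i => a i * z ^+ i) s -> pseval abs a z = s.
Proof.
move=> hs; apply: (series_unique _ hs); rewrite /pseval.
by apply: (epsilon_spec (inhabits 0) (fun s => series_to abs _ s)); exists s.
Qed.

Lemma eq_series_to (u v : nat -> K) s : u =1 v -> series_to abs u s -> series_to abs v s.
Proof.
move=> uv hs eps eps_gt0; have [N hN] := hs _ eps_gt0; exists N => n Nn.
by rewrite -(eq_bigr _ (fun (i : 'I_n) _ => uv i)); apply: hN.
Qed.

Lemma series_toD u v s t : series_to abs u s -> series_to abs v t ->
  series_to abs (fun i => u i + v i) (s + t).
Proof.
move=> hs ht eps eps_gt0; have [N1 h1] := hs _ eps_gt0; have [N2 h2] := ht _ eps_gt0.
exists (maxn N1 N2) => n hn; rewrite big_split /= opprD addrACA.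
by apply: absD_lt; [apply: h1 | apply: h2]; apply: leq_trans hn; rewrite ?leq_maxl ?leq_maxr.
Qed.

Lemma series_toMl c u s : series_to abs u s -> series_to abs (fun i => c * u i) (c * s).
Proof.
move=> hs eps eps_gt0; have c1_gt0 : 0 < abs c + 1 by apply: ltr_wpDl.
have [N hN] := hs (eps / (abs c + 1)) (divr_gt0 eps_gt0 c1_gt0).
exists N => n Nn; rewrite -mulr_sumr -mulrBr absM.
apply: le_lt_trans (_ : _ <= (abs c + 1) * abs (\sum_(i < n) u i - s)) _.
  by rewrite ler_wpM2r // lerDl.
by rewrite -ltr_pdivlMl // mulrC hN.
Qed.

Lemma series_to_finite u n0 : (forall i, (n0 <= i)%N -> u i = 0) ->
  series_to abs u (\sum_(i < n0) u i).
Proof.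
move=> u0 eps eps_gt0; exists n0 => n n0n.
by rewrite partial_sumB // big_nat_cond big1 ?abs0 // => i /andP [/andP [ni _] _]; apply: u0.
Qed.

Lemma abs_series_tail_le u s k M : series_to abs u s -> 0 <= M ->
  (forall i, (k <= i)%N -> abs (u i) <= M) -> abs (s - \sum_(i < k) u i) <= M.
Proof.
move=> hs M0 hu; apply: (@closed_ball_lim (fun n => \sum_(i < n) u i) _ _ k) => // n kn.
exact: abs_partial_sumB_le.
Qed.

Lemma abs_series_le u s M : series_to abs u s -> 0 <= M ->
  (forall i, abs (u i) <= M) -> abs s <= M.
Proof.
move=> hs M0 hu; have := @abs_series_tail_le u s 0 M hs M0 (fun i _ => hu i).
by rewrite big_ord0 subr0.
Qed.

(** * Power series on the closed unit disc *)

Lemma vanishing_mulX b t : vanishing b -> abs t <= 1 -> vanishing (fun i => b i * t ^+ i).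
Proof.
move=> b0 ht eps eps_gt0; have [N hN] := b0 _ eps_gt0; exists N => i Ni.
by apply: le_lt_trans (hN _ Ni); rewrite absM absX ler_piMr ?exprn_ile1.
Qed.

Lemma pseval_series_to b t : vanishing b -> abs t <= 1 ->
  series_to abs (fun i => b i * t ^+ i) (pseval abs b t).
Proof.
by move=> b0 t1; have [s hs] := series_exists (vanishing_mulX b0 t1); rewrite (pseval_eq hs).
Qed.

Lemma pseval_lipschitz b t s : (forall i, abs (b i) <= 1) -> vanishing b ->
  abs t <= 1 -> abs s <= 1 -> abs (pseval abs b t - pseval abs b s) <= abs (t - s).
Proof.
move=> b1 b0 ht hs.
have := series_toD (pseval_series_to b0 ht) (series_toMl (-1) (pseval_series_to b0 hs)).
rewrite mulN1r => hser; apply: (abs_series_le hser) => // i.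
by rewrite mulN1r -mulrBr absM (le_trans _ (absXB_le i ht hs)) // ler_piMl.
Qed.

Definition distinguished (N : nat) (b : nat -> K) :=
  [/\ abs (b N) = 1, forall i, (i < N)%N -> abs (b i) <= 1,
      exists2 d, d < 1 & forall i, (N < i)%N -> abs (b i) <= d & vanishing b].

Lemma distinguished_coef_le1 N b : distinguished N b -> forall i, abs (b i) <= 1.
Proof.
case=> bN b_lt [d d1 b_gt] _ i; have [iN|Ni|->] := ltngtP i N; rewrite ?bN //.
  exact: b_lt.
exact: le_trans (b_gt _ Ni) (ltW d1).
Qed.

Lemma abs_pseval_distinguished0 U t : distinguished 0 U -> abs t <= 1 ->
  abs (pseval abs U t) = 1.
Proof.
case=> U0 _ [d d1 U_gt] U_van ht.
have d0 : 0 <= d := le_trans (abs_ge0 _) (U_gt 1%N isT).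
have tail := @abs_series_tail_le _ _ 1 d (pseval_series_to U_van ht) d0.
have -> : pseval abs U t = U 0%N + (pseval abs U t - \sum_(i < 1) U i * t ^+ i).
  by rewrite big_ord1 expr0 mulr1 addrC subrK.
rewrite abs_isosceles U0 //; apply: le_lt_trans d1; apply: tail => i hi.
by rewrite absM absX (le_trans _ (U_gt _ hi)) // ler_piMr ?exprn_ile1.
Qed.

(* Coefficients of b / (X - z) when b(z) = 0: -(b_0 + ... + b_k z^k) / z^(k+1) equals
   b_(k+1) + b_(k+2) z + ..., which is the formula used at z = 0. *)
Definition divXsubC_coef (b : nat -> K) (z : K) (k : nat) : K :=
  if z == 0 then b k.+1 else - (\sum_(i < k.+1) b i * z ^+ i) / z ^+ k.+1.

Section DivXsubC.
Variables (b : nat -> K) (z : K).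
Hypotheses (b_van : vanishing b) (hz : abs z <= 1) (root_z : pseval abs b z = 0).
Local Notation g := (divXsubC_coef b z).

Lemma divXsubC_coefE k : b k = (if k is k'.+1 then g k' else 0) - z * g k.
Proof.
rewrite /divXsubC_coef; case: eqP => [z0|/eqP zn].
  rewrite z0 mul0r subr0; case: k => [|k] //.
  have := root_z; rewrite (pseval_eq (@series_to_finite _ 1 _)).
    by rewrite big_ord1 z0 expr0 mulr1.
  by move=> [|i] // _; rewrite z0 expr0n mulr0.
case: k => [|k]; first by rewrite big_ord1 expr0 mulr1 expr1; field.
rewrite (big_ord_recr k.+1) /= !exprS; field.
by rewrite ?mulf_neq0 ?expf_neq0.
Qed.

Lemma abs_divXsubC_coef_le k M : 0 <= M ->
  (forall i, (k < i)%N -> abs (b i) <= M) -> abs (g k) <= M.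
Proof.
move=> M0 bM; rewrite /divXsubC_coef; case: eqP => [_|/eqP zn]; first exact: bM.
have := @abs_series_tail_le _ _ k.+1 (M * abs z ^+ k.+1) (pseval_series_to b_van hz).
rewrite root_z sub0r absM absN absV absX ler_pdivrMr ?exprn_gt0 ?abs_gt0 //.
apply; first by rewrite mulr_ge0 ?exprn_ge0.
move=> i ki; rewrite absM absX ler_pM ?exprn_ge0 ?bM //.
by rewrite -(subnK ki) exprD ler_piMl ?exprn_ge0 ?exprn_ile1.
Qed.

Lemma vanishing_divXsubC_coef : vanishing g.
Proof.
move=> eps eps_gt0; have [N hN] := b_van (divr_gt0 eps_gt0 (ltr0Sn _ 1)).
exists N => k Nk; apply: le_lt_trans (_ : _ <= eps / 2%:R) _.
  apply: abs_divXsubC_coef_le; first by rewrite divr_ge0 ?ltW.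
  by move=> i ki; apply/ltW/hN/(leq_trans Nk)/ltnW.
by rewrite ltr_pdivrMr ?ltr0Sn // ltr_pMr // ltr1n.
Qed.

Lemma pseval_divXsubC t : abs t <= 1 -> pseval abs b t = (t - z) * pseval abs g t.
Proof.
move=> ht; have g_ser := pseval_series_to vanishing_divXsubC_coef ht.
have telescope n : (t - z) * \sum_(k < n.+1) g k * t ^+ k =
    \sum_(k < n.+1) b k * t ^+ k + g n * t ^+ n.+1.
  elim: n => [|n IH]; first by rewrite !big_ord1 divXsubC_coefE /=; ring.
  rewrite big_ord_recr /= mulrDr IH [in RHS]big_ord_recr /= divXsubC_coefE !exprS; ring.
apply: pseval_eq => eps eps_gt0.
have [N1 h1] := g_ser _ eps_gt0; have [N2 h2] := vanishing_divXsubC_coef eps_gt0.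
exists (maxn N1 N2).+1 => -[//|n] hn.
have -> : \sum_(i < n.+1) b i * t ^+ i - (t - z) * pseval abs g t =
    (t - z) * (\sum_(k < n.+1) g k * t ^+ k - pseval abs g t) - g n * t ^+ n.+1.
  by rewrite mulrBr telescope; ring.
apply: absB_lt; rewrite absM.
  apply: le_lt_trans (_ : _ <= 1 * _) _; first by apply: ler_wpM2r; rewrite ?absB_le.
  by rewrite mul1r h1 // (leq_trans (leq_maxl N1 N2) (ltnW hn)).
rewrite absX (le_lt_trans _ (h2 n _)) ?ler_piMr ?exprn_ile1 //.
exact: leq_trans (leq_maxr N1 N2) hn.
Qed.

End DivXsubC.

Lemma distinguished_divXsubC N b z : distinguished N.+1 b -> abs z <= 1 ->
  pseval abs b z = 0 -> distinguished N (divXsubC_coef b z).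
Proof.
move=> hb hz root_z; have b1 := distinguished_coef_le1 hb.
case: hb => bN _ [d d1 b_gt] b_van.
have d0 : 0 <= d := le_trans (abs_ge0 _) (b_gt N.+2 (ltnSn _)).
have g_le := abs_divXsubC_coef_le b_van hz root_z.
split; last exact: vanishing_divXsubC_coef.
- have -> : divXsubC_coef b z N = b N.+1 + z * divXsubC_coef b z N.+1.
    by rewrite (divXsubC_coefE root_z N.+1) subrK.
  rewrite abs_isosceles ?bN // absM; apply: le_lt_trans (_ : _ <= 1 * d) _.
    by rewrite ler_pM // g_le // => i Ni; apply/b_gt/ltnW.
  by rewrite mul1r.
- by move=> i _; apply: g_le => // j _; apply: b1.
- by exists d => // i Ni; apply: g_le => // j ij; apply/b_gt/(leq_ltn_trans Ni).
Qed.

(** * Weierstrass preparation *)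

Definition poly_distinguished (d : nat) (G : {poly K}) :=
  [/\ forall i, abs G`_i <= 1, abs G`_d = 1 & forall i, (d < i)%N -> abs G`_i < 1].

Lemma poly_distinguishedM d1 d2 G1 G2 : poly_distinguished d1 G1 ->
  poly_distinguished d2 G2 -> poly_distinguished (d1 + d2) (G1 * G2).
Proof.
case=> G1_le1 G1d G1_gt [G2_le1 G2d G2_gt].
split.
- by move=> k; rewrite coefM; apply: abs_sum_le => // j _; apply: absM_le1.
- have e1 : abs (G1`_d1 * G2`_(d1 + d2 - d1)) = 1 by rewrite addKn absM G1d G2d mulr1.
  rewrite coefM (@abs_sum_dominant _ (fun j => G1`_j * G2`_(d1 + d2 - j)) d1) //=.
  + by rewrite ltnS leq_addr.
  + by rewrite e1 ltr01.
  move=> j jl jn; rewrite e1; have [d1j|jd1] := ltnP d1 j.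
    by apply: absM_lt1; [apply: G1_gt | apply: G2_le1].
  rewrite mulrC; apply: absM_lt1; last exact: G1_le1.
  by apply: G2_gt; rewrite ltn_subRL ltn_add2r ltn_neqAle jd1 andbT.
- move=> k dk; rewrite coefM; apply: abs_sum_lt => // j _.
  have [d1j|jd1] := ltnP d1 j; first by apply: absM_lt1; [apply: G1_gt | apply: G2_le1].
  rewrite mulrC; apply: absM_lt1; last exact: G1_le1.
  by apply: G2_gt; rewrite ltn_subRL (leq_ltn_trans _ dk) // leq_add2r.
Qed.

Lemma poly_distinguished_prod (s : seq K) (F : K -> {poly K}) (d : K -> nat) :
  (forall r, r \in s -> poly_distinguished (d r) (F r)) ->
  poly_distinguished (\sum_(r <- s) d r)%N (\prod_(r <- s) F r).
Proof.
elim: s => [|a s IH] hF; rewrite ?big_nil ?big_cons.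
  split=> [i||[|i] //]; rewrite coef1 ?abs1 ?abs0 ?ltr01 //.
  by case: (i == 0%N); rewrite ?abs1 ?abs0 ?ler01.
apply: poly_distinguishedM; first by apply: hF; rewrite mem_head.
by apply: IH => r rs; apply/hF/mem_behead.
Qed.

Lemma poly_distinguished_XsubC r : abs r <= 1 -> poly_distinguished 1 ('X - r%:P).
Proof.
move=> hr; split=> [[|[|i]]||[|[|i]] //]; rewrite coefB coefX coefC /=;
  by rewrite ?subr0 ?sub0r ?absN ?abs1 ?abs0 ?ler01 ?ltr01.
Qed.

Lemma poly_distinguished_1subX r : 1 < abs r -> poly_distinguished 0 (1 - r^-1 *: 'X).
Proof.
move=> hr; have r_inv : abs r^-1 < 1 by rewrite absV invf_lt1 // (lt_trans ltr01 hr).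
split=> [[|[|i]]||[|[|i]] //]; rewrite coefB coef1 coefZ coefX /=;
  by rewrite ?mulr0 ?mulr1 ?subr0 ?sub0r ?absN ?abs1 ?abs0 ?ler01 ?ltr01 ?(ltW r_inv).
Qed.

Lemma poly_disc_factor (P : {poly K}) : exists c (A B : seq K),
  [/\ forall r, r \in A -> abs r <= 1, forall r, r \in B -> 1 < abs r &
      P = c *: (\prod_(r <- A) ('X - r%:P) * \prod_(r <- B) (1 - r^-1 *: 'X))].
Proof.
have [rs ->] := closed_field_poly_normal P; set a := fun r => abs r <= 1.
exists (lead_coef P * \prod_(r <- rs | ~~ a r) (- r)), [seq r <- rs | a r], [seq r <- rs | ~~ a r].
split=> [r|r|]; rewrite ?mem_filter; [by case/andP | by rewrite ltNge; case/andP |].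
rewrite (bigID a) /= !big_filter -scalerA; congr (_ *: _); rewrite scalerAr; congr (_ * _).
rewrite -scaler_prod; apply: eq_bigr => r; rewrite /a -ltNge => r_gt1.
have r_neq0 : r != 0 by apply: contraTneq r_gt1 => ->; rewrite abs0 ltr10.
by rewrite scalerBr scalerA mulNr mulfV // scaleN1r opprK addrC -polyCN alg_polyC.
Qed.

Lemma poly_distinguished_roots N (P : {poly K}) : poly_distinguished N P ->
  exists A : seq K, [/\ size A = N, forall r, r \in A -> abs r <= 1 &
    forall w, abs w <= 1 -> abs P.[w] = \prod_(r <- A) abs (w - r)].
Proof.
move=> hP; have [c [A [B [A_le1 B_gt1 eP]]]] := poly_disc_factor P.
rewrite {}eP in hP *; case: hP => P_le1 PN P_gt.
set G := _ * _ in P_le1 PN P_gt *.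
have [] : poly_distinguished (\sum_(r <- A) 1 + \sum_(r <- B) 0)%N G.
  apply: poly_distinguishedM; apply: poly_distinguished_prod => r rAB.
    exact/poly_distinguished_XsubC/A_le1.
  exact/poly_distinguished_1subX/B_gt1.
rewrite sum1_size big1 ?addn0 // => G_le1 GA G_gt.
have absP i : abs (c *: G)`_i = abs c * abs G`_i by rewrite coefZ absM.
have c1 : abs c = 1.
  apply/eqP; rewrite eq_le; apply/andP; split.
    by have := P_le1 (size A); rewrite absP GA mulr1.
  by rewrite -PN absP ler_piMr ?G_le1.
have sA : size A = N.
  have [lt_AN|lt_NA|//] := ltngtP (size A) N.
  - by have := G_gt _ lt_AN; rewrite -[abs G`_N]mul1r -{1}c1 -absP PN ltxx.
  - by have := P_gt _ lt_NA; rewrite absP c1 mul1r GA ltxx.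
exists A; split=> // w w_le1; rewrite hornerZ absM c1 mul1r hornerM !horner_prod absM !abs_prod.
rewrite [X in _ * X]big_seq [X in _ * X]big1 ?mulr1 => [|r /B_gt1 r_gt1].
  by apply: eq_bigr => r _; rewrite hornerXsubC.
rewrite hornerD hornerN hornerC hornerZ hornerX abs_isosceles ?abs1 // absN absM absV.
by rewrite mulrC ltr_pdivrMr ?mul1r ?(le_lt_trans w_le1) ?(lt_trans ltr01).
Qed.

Definition trunc_poly (b : nat -> K) (n : nat) : {poly K} := \poly_(i < n) b i.

Lemma horner_trunc_poly b n t : (trunc_poly b n).[t] = \sum_(i < n) b i * t ^+ i.
Proof. exact: horner_poly. Qed.

Lemma trunc_poly_roots N b n : distinguished N b -> (N < n)%N ->
  exists A : seq K, [/\ size A = N, forall r, r \in A -> abs r <= 1 &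
    forall w, abs w <= 1 -> abs (trunc_poly b n).[w] = \prod_(r <- A) abs (w - r)].
Proof.
move=> hb Nn; have b1 := distinguished_coef_le1 hb; case: hb => bN _ [d d1 b_gt] _.
apply: poly_distinguished_roots; split=> [i||i Ni]; rewrite coef_poly ?Nn //.
  by case: ifP; rewrite ?abs0 ?ler01.
by case: ifP; rewrite ?abs0 ?ltr01 // => _; apply: le_lt_trans (b_gt _ Ni) d1.
Qed.

Lemma seq_argmin (T : eqType) (f : T -> R) (s : seq T) : s != [::] ->
  exists2 r, r \in s & forall r', r' \in s -> f r <= f r'.
Proof.
elim: s => [//|a s IH] _; have [->|s_neq0] := eqVneq s [::].
  by exists a; rewrite ?mem_head // => r'; rewrite inE => /eqP ->.
have [r rs r_min] := IH s_neq0; have [ar|ra] := leP (f a) (f r).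
  exists a; rewrite ?mem_head // => r'; rewrite inE => /predU1P [->//|/r_min].
  exact: le_trans.
exists r; first by rewrite inE rs orbT.
by move=> r'; rewrite inE => /predU1P [->|/r_min //]; apply: ltW.
Qed.

Lemma trunc_root_step N b n w : distinguished N b -> (0 < N)%N -> (N < n)%N ->
  abs w <= 1 -> (trunc_poly b n).[w] = 0 ->
  exists w', [/\ abs w' <= 1, (trunc_poly b n.+1).[w'] = 0 & abs (w' - w) ^+ N <= abs (b n)].
Proof.
move=> hb N_gt0 Nn w1 root_w; have [A [sA A1 hA]] := trunc_poly_roots hb (leqW Nn).
have A_neq0 : A != [::] by apply: contraTneq N_gt0 => A0; rewrite -sA A0.
have [r rA r_min] := seq_argmin (fun r => abs (r - w)) A_neq0.
exists r; split; first exact: A1.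
  apply/abs_eq0; rewrite hA ?A1 //; apply/eqP; rewrite prodf_seq_eq0; apply/hasP.
  by exists r => //=; rewrite subrr abs0.
apply: (@le_trans _ _ (abs (trunc_poly b n.+1).[w])).
  rewrite hA // -sA -(count_predT A) -iter_mulr_1 -big_const_seq big_seq [X in _ <= X]big_seq.
  by apply: ler_prod => r' r'A; rewrite abs_ge0 -[w - r']opprB absN r_min.
rewrite horner_trunc_poly big_ord_recr /= -horner_trunc_poly root_w add0r absM absX.
by rewrite ler_piMr ?exprn_ile1.
Qed.

Lemma dependent_choice (T : Type) (P : nat -> T -> Prop) (S : nat -> T -> T -> Prop) x0 :
  P 0%N x0 -> (forall n x, P n x -> exists y, P n.+1 y /\ S n x y) ->
  exists u : nat -> T, forall n, P n (u n) /\ S n (u n) (u n.+1).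
Proof.
move=> P0 step; pose next n x := epsilon (inhabits x0) (fun y => P n.+1 y /\ S n x y).
pose fix u n := if n is m.+1 then next m (u m) else x0.
have uP n : P n (u n) by elim: n => [//|n IH]; exact: (proj1 (epsilon_spec _ _ (step _ _ IH))).
exists u => n; split; first exact: uP.
exact: (proj2 (epsilon_spec _ _ (step _ _ (uP n)))).
Qed.

Lemma cauchy_of_steps (u : nat -> K) :
  (forall eps, 0 < eps -> exists N, forall k, (N <= k)%N -> abs (u k.+1 - u k) < eps) ->
  cauchy_seq u.
Proof.
move=> steps eps eps_gt0; have [N hN] := steps _ eps_gt0.
have from_N n : (N <= n)%N -> abs (u n - u N) < eps.
  elim: n => [|n IH]; first by rewrite leqn0 => /eqP ->; rewrite subrr abs0.
  rewrite leq_eqVlt => /predU1P [->|Nn]; first by rewrite subrr abs0.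
  by rewrite ltnS in Nn; rewrite -(subrKA (u n)); apply: absD_lt; [apply: hN | apply: IH].
by exists N => m n Nm Nn; rewrite -(subrKA (u N)) -[u N - u n]opprB; apply: absB_lt; apply: from_N.
Qed.

Lemma pseval_lim_trunc_roots b (u : nat -> K) l n0 :
  (forall i, abs (b i) <= 1) -> vanishing b ->
  (forall k, abs (u k) <= 1 /\ (trunc_poly b (n0 + k)).[u k] = 0) -> converges_to u l ->
  abs l <= 1 /\ pseval abs b l = 0.
Proof.
move=> b1 b_van u_root cvg_u.
have l1 : abs l <= 1.
  rewrite -(subr0 l); apply: (@closed_ball_lim u _ _ 0) => // n _.
  by rewrite subr0; case: (u_root n).
split=> //; apply: abs_eq0_small => eps eps_gt0.
have eps2_gt0 : 0 < eps / 2%:R by rewrite divr_gt0 ?ltr0Sn.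
have eps2_lt : eps / 2%:R < eps by rewrite ltr_pdivrMr ?ltr0Sn // ltr_pMr // ltr1n.
have [Ka ha] := cvg_u _ eps_gt0; have [Kb hb] := b_van _ eps2_gt0.
pose n := maxn Ka Kb; pose m := (n0 + n)%N.
have -> : pseval abs b l = (pseval abs b l - \sum_(i < m) b i * l ^+ i) +
    (\sum_(i < m) b i * l ^+ i - \sum_(i < m) b i * u n ^+ i).
  by rewrite -[\sum_(i < m) b i * u n ^+ i]horner_trunc_poly (proj2 (u_root n)) subr0 subrK.
apply: absD_lt.
  apply: le_lt_trans eps2_lt; apply: abs_series_tail_le (pseval_series_to b_van l1) _ _ => [|i mi].
    exact: ltW.
  rewrite absM absX (le_trans _ (ltW (hb i _))) ?ler_piMr ?exprn_ile1 //.
  by apply: leq_trans mi; rewrite (leq_trans (leq_maxr Ka Kb)) ?leq_addl.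
rewrite -sumrB; apply: (@le_lt_trans _ _ (abs (l - u n))).
  apply: abs_sum_le => // i _; rewrite -mulrBr absM.
  by apply: le_trans (absXB_le i l1 (proj1 (u_root n))); rewrite ler_piMl.
by rewrite -absN opprB ha ?leq_maxl.
Qed.

Lemma distinguished_root N b : distinguished N b -> (0 < N)%N ->
  exists z, abs z <= 1 /\ pseval abs b z = 0.
Proof.
move=> hb N_gt0; have b1 := distinguished_coef_le1 hb; have [_ _ _ b_van] := hb.
have [w0 w0_1 root_w0] : exists2 w0, abs w0 <= 1 & (trunc_poly b (N.+1 + 0)).[w0] = 0.
  have [[|w0 A] [sA A1 hA]] := trunc_poly_roots hb (ltnSn N); first by move: N_gt0; rewrite -sA.
  exists w0; first exact/A1/mem_head.
  by apply/abs_eq0; rewrite addn0 hA ?A1 ?mem_head // big_cons subrr abs0 mul0r.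
pose P k w := abs w <= 1 /\ (trunc_poly b (N.+1 + k)).[w] = 0.
pose S k w w' := abs (w' - w) ^+ N <= abs (b (N.+1 + k)%N).
have [u hu] : exists u : nat -> K, forall k, P k (u k) /\ S k (u k) (u k.+1).
  apply: (@dependent_choice K P S w0) => [//|k w [w1 root_w]].
  have Nk : (N < N.+1 + k)%N by rewrite leq_addr.
  have [w' [w'1 root_w' step]] := trunc_root_step hb N_gt0 Nk w1 root_w.
  by exists w'; rewrite /P addnS.
have [l cvg_u] : exists l, converges_to u l.
  apply/complete/cauchy_of_steps => eps eps_gt0.
  have [K1 hK1] := b_van _ (exprn_gt0 N eps_gt0); exists K1 => k K1k.
  rewrite -(ltr_pXn2r N_gt0) ?nnegrE ?abs_ge0 ?ltW //; apply: le_lt_trans (proj2 (hu k)) _.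
  by apply: hK1; rewrite (leq_trans K1k) // leq_addl.
by exists l; apply: (pseval_lim_trunc_roots b1 b_van (fun k => proj1 (hu k)) cvg_u).
Qed.

Theorem distinguished_factor N b : distinguished N b -> exists zs : seq K,
  [/\ size zs = N, forall z, z \in zs -> abs z <= 1 &
    exists2 U, distinguished 0 U & forall t, abs t <= 1 ->
      pseval abs b t = (\prod_(z <- zs) (t - z)) * pseval abs U t].
Proof.
elim: N b => [|N IH] b hb.
  by exists [::]; split=> //; exists b => [//|t _]; rewrite big_nil mul1r.
have [z [z1 root_z]] := distinguished_root hb (ltn0Sn N).
have [_ _ _ b_van] := hb.
have [zs [szs zs1 [U hU b_fact]]] := IH _ (distinguished_divXsubC hb z1 root_z).
exists (z :: zs); split; first by rewrite /= szs.
  by move=> r; rewrite inE => /predU1P [->|/zs1].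
by exists U => [//|t t1]; rewrite (pseval_divXsubC b_van z1 root_z t1) b_fact // big_cons mulrA.
Qed.

(** * Multiplicities of zeros *)

Lemma prodXsub_count_mem (ts : seq K) t t0 : \prod_(y <- ts) (t - y) =
  (t - t0) ^+ count_mem t0 ts * \prod_(y <- ts | y != t0) (t - y).
Proof.
elim: ts => [|a ts IH]; first by rewrite !big_nil expr0 mulr1.
by rewrite !big_cons /= IH; case: eqVneq => [->|_] /=; rewrite ?add1n ?exprS -?mulrA // mulrCA.
Qed.

Lemma abs_prod_sub_le1 (ts : seq K) (P : pred K) t : (forall y, y \in ts -> abs y <= 1) ->
  abs t <= 1 -> abs (\prod_(y <- ts | P y) (t - y)) <= 1.
Proof.
move=> ts1 t1; rewrite abs_prod big_seq_cond; apply: prodr_ile1 => y /andP [yts _].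
by rewrite abs_ge0 /= absB_le // ts1.
Qed.

Lemma prod_sub_lipschitz (ts : seq K) (P : pred K) t t0 : (forall y, y \in ts -> abs y <= 1) ->
  abs t <= 1 -> abs t0 <= 1 ->
  abs (\prod_(y <- ts | P y) (t - y) - \prod_(y <- ts | P y) (t0 - y)) <= abs (t - t0).
Proof.
move=> ts1 t1 t01; elim: ts ts1 => [|a ts IH] ts1; first by rewrite !big_nil subrr abs0.
have ts1' y : y \in ts -> abs y <= 1 by move=> yts; apply/ts1/mem_behead.
rewrite !big_cons; case: (P a); last exact: IH.
apply: absMB_le; [exact: absB_le t1 (ts1 a (mem_head a ts)) | exact: abs_prod_sub_le1 | |].
  by rewrite opprB addrA subrK.
exact: IH.
Qed.

Lemma mult_at_local f g z0 m : (exists2 del, 0 < del & forall z, abs (z - z0) < del -> f z = g z) ->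
  mult_at abs g z0 m -> mult_at abs f z0 m.
Proof.
move=> [del del_gt0 fg] [L [L_neq0 hL]]; exists L; split=> // eps /hL [del' [del'_gt0 hdel']].
exists (Num.min del del'); split=> [|z zz0]; first by rewrite lt_min del_gt0.
by rewrite lt_min => /andP [/fg -> /(hdel' _ zz0)].
Qed.

Lemma mult_at_affine g t0 m A a x : A != 0 -> x != 0 -> mult_at abs g t0 m ->
  mult_at abs (fun z => A * g ((z - a) / x)) (a + x * t0) m.
Proof.
move=> A_neq0 x_neq0 [L [L_neq0 hL]]; exists (A * L / x ^+ m).
split; first by rewrite mulf_neq0 ?mulf_neq0 ?invr_eq0 ?expf_neq0.
have C_gt0 : 0 < abs (A / x ^+ m) by rewrite abs_gt0 // mulf_neq0 ?invr_eq0 ?expf_neq0.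
move=> eps eps_gt0; have [del [del_gt0 hdel]] := hL _ (divr_gt0 eps_gt0 C_gt0).
exists (del * abs x); split=> [|z zt0 small]; first by rewrite mulr_gt0 ?abs_gt0.
have ez : z - (a + x * t0) = x * ((z - a) / x - t0) by field.
set t := (z - a) / x in ez *; rewrite /= ez.
have tt0 : t != t0.
  by apply: contraNneq zt0 => tt0; rewrite -subr_eq0 ez tt0 subrr mulr0.
rewrite ez absM mulrC ltr_pM2r ?abs_gt0 // in small.
have -> : A * g t / (x * (t - t0)) ^+ m - A * L / x ^+ m = A / x ^+ m * (g t / (t - t0) ^+ m - L).
  by rewrite exprMn; field; rewrite !expf_neq0 // subr_eq0.
by rewrite absM mulrC -ltr_pdivlMr // hdel.
Qed.

Lemma mult_at_unit_factor (ts : seq K) (V : K -> K) t0 :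
  (forall y, y \in ts -> abs y <= 1) -> abs t0 <= 1 ->
  (forall t, abs t <= 1 -> abs (V t) = 1) ->
  (forall t, abs t <= 1 -> abs (V t - V t0) <= abs (t - t0)) ->
  mult_at abs (fun t => \prod_(y <- ts) (t - y) * V t) t0 (count_mem t0 ts).
Proof.
move=> ts1 t01 V1 V_lip; pose H t := \prod_(y <- ts | y != t0) (t - y) * V t.
exists (H t0); split.
  apply: mulf_neq0; last by apply/eqP => /abs_eq0; rewrite V1 // => /eqP; rewrite oner_eq0.
  by rewrite prodf_seq_neq0; apply/allP => y _; apply/implyP; rewrite subr_eq0 eq_sym.
move=> eps eps_gt0; exists (Num.min 1 eps); split=> [|t tt0]; first by rewrite lt_min ltr01.
rewrite lt_min => /andP [near1 near_eps].
have t1 : abs t <= 1 by rewrite -(subrK t0 t); apply: absD_le (ltW near1) t01.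
rewrite (prodXsub_count_mem _ _ t0).
have -> : (t - t0) ^+ count_mem t0 ts * \prod_(y <- ts | y != t0) (t - y) * V t /
    (t - t0) ^+ count_mem t0 ts = H t by rewrite /H; field; rewrite expf_neq0 // subr_eq0.
apply: le_lt_trans near_eps.
by apply: absMB_le; rewrite ?abs_prod_sub_le1 ?V1 ?prod_sub_lipschitz ?V_lip.
Qed.

Definition counts_preimages (D : K -> Prop) (f : K -> K) (w : K) (n : nat) :=
  exists s : seq K, uniq s /\ (forall z, (D z /\ f z = w) <-> z \in s) /\
    exists m : K -> nat, (forall z, z \in s -> mult_at abs (fun y => f y - w) z (m z)) /\
      (\sum_(z <- s) m z)%N = n.

Lemma counts_preimages_exists D f w n : counts_preimages D f w n -> (0 < n)%N ->
  exists z, D z /\ f z = w.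
Proof.
move=> [[|z s] [_ [mem_s [m [_ sum_m]]]]] n_gt0; last by exists z; apply/mem_s/mem_head.
by move: n_gt0; rewrite -sum_m big_nil.
Qed.

Lemma sum_count_mem_undup (T : eqType) (s : seq T) :
  (\sum_(x <- undup s) count_mem x s)%N = size s.
Proof.
rewrite -(perm_size (perm_count_undup s)) size_flatten sumnE !big_map.
by apply: eq_bigr => x _; rewrite size_nseq.
Qed.

Lemma distinguished_counts_zeros N b : distinguished N b ->
  counts_preimages (fun t => abs t <= 1) (pseval abs b) 0 N.
Proof.
move=> hb; have [ts [sts ts1 [U hU b_fact]]] := distinguished_factor hb.
have U1 := abs_pseval_distinguished0 hU; have [_ _ _ U_van] := hU.
have zeroP t : (abs t <= 1 /\ pseval abs b t = 0) <-> t \in ts.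
  split=> [[t1]|tts]; last first.
    by split; rewrite ?ts1 ?b_fact ?ts1 // (big_rem t) //= subrr !mul0r.
  rewrite b_fact // => /eqP; rewrite mulf_eq0 prodf_seq_eq0 => /orP [/hasP [y yts /=]|].
    by rewrite subr_eq0 => /eqP ->.
  by move=> /eqP /abs_eq0; rewrite U1 // => /eqP; rewrite oner_eq0.
exists (undup ts); split; first exact: undup_uniq.
split=> [t|]; first by rewrite mem_undup; apply: zeroP.
exists (fun t => count_mem t ts); split; last by rewrite sum_count_mem_undup.
move=> t0; rewrite mem_undup => /ts1 t01.
apply: mult_at_local (mult_at_unit_factor ts1 t01 U1 _); last first.
  by move=> t t1; apply: pseval_lipschitz (distinguished_coef_le1 hU) U_van t1 t01.
exists 1 => // t near_t0; rewrite subr0 b_fact //.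
by rewrite -(subrK t0 t); apply: absD_le (ltW near_t0) t01.
Qed.

Lemma counts_preimages_rescale (g f : K -> K) a x A w n :
  x != 0 -> A != 0 -> abs a <= abs x ->
  (forall z, abs z <= abs x -> f z - w = A * g ((z - a) / x)) ->
  counts_preimages (fun t => abs t <= 1) g 0 n ->
  counts_preimages (fun z => abs z <= abs x) f w n.
Proof.
move=> x_neq0 A_neq0 ax fg [s [s_uniq [mem_s [m [m_mult sum_m]]]]].
pose phi t := a + x * t.
have phiK t : (phi t - a) / x = t by rewrite /phi addrC addKr mulrC mulKf.
have phi_inj : injective phi by move=> t t' /(addrI a) /(mulfI x_neq0).
have in_ball z : abs z <= abs x <-> abs ((z - a) / x) <= 1.
  rewrite absM absV ler_pdivrMr ?abs_gt0 // mul1r; split=> [|za]; first by move/absB_le; apply.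
  by rewrite -(subrK a z); apply: absD_le.
have ball_phi t : abs t <= 1 -> abs (phi t) <= abs x by move=> t1; apply/in_ball; rewrite phiK.
exists (map phi s); split; first by rewrite map_inj_uniq.
split=> [z|].
  split=> [[zx fz]|/mapP [t ts ->]].
    rewrite -[z](subrK a) addrC -[z - a](mulfVK x_neq0) mulrC; apply: map_f; apply/mem_s.
    by split; [apply/in_ball | apply: (mulfI A_neq0); rewrite mulr0 -fg // fz subrr].
  have [t1 gt] := proj2 (mem_s t) ts; split; first exact: ball_phi.
  by apply/eqP; rewrite -subr_eq0 fg ?ball_phi // phiK gt mulr0.
exists (fun z => m ((z - a) / x)); split; last by rewrite big_map; under eq_bigr do rewrite phiK.
move=> _ /mapP [t ts ->]; rewrite phiK.
apply: mult_at_local (mult_at_affine a A_neq0 x_neq0 (m_mult t ts)).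
exists (abs x); first by rewrite abs_gt0.
move=> z near_z; rewrite subr0 fg // -(subrK (phi t) z).
by apply: absD_le (ltW near_z) _; apply/ball_phi/(proj1 (proj2 (mem_s t) ts)).
Qed.

(** * The map Q_lam *)

Section PolynomialLikeMap.
Variables (p : nat) (rhat : R) (x : K) (Q : nat -> K) (c : R) (lam h : K).
Hypotheses (p_prime : prime p) (abs_p : abs p%:R = p%:R^-1).
Hypotheses (abs_x : abs x = rhat) (rhat_gt1 : 1 < rhat).
Hypotheses (Q_in_H : in_H abs rhat Q) (c_lt1 : c < 1).
Hypothesis Q_le_c : forall i, abs (Q i) * rhat ^+ i <= c.
Hypotheses (lam_near1 : abs (lam - 1) < 1) (h_near1 : abs (h - 1) <= rhat).

Definition qcoef i := Q i + (if i == p then lam / p%:R else 0)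
  + (if i == p.+1 then 1 - lam / p%:R else 0).
Definition image_radius := p%:R * rhat ^+ p.+1.
Definition image_center := Q 0%N + 1 - h.
Definition qlead := qcoef p.+1 * x ^+ p.+1.
Definition qnormal w' i := (qcoef i - (if i == 0%N then w' else 0)) * x ^+ i / qlead.

Lemma natp_gt1 : 1 < p%:R :> R. Proof. by rewrite ltr1n prime_gt1. Qed.

Lemma rhat_gt0 : 0 < rhat. Proof. exact: lt_trans ltr01 rhat_gt1. Qed.

Lemma rhat_lt_radius : rhat < image_radius.
Proof.
apply: le_lt_trans (_ : rhat <= rhat ^+ p.+1) _; first by rewrite -[X in X <= _]expr1 ler_eXn2l.
by rewrite ltr_pMl ?exprn_gt0 ?rhat_gt0 ?natp_gt1.
Qed.

Lemma radius_gt1 : 1 < image_radius. Proof. exact: lt_trans rhat_gt1 rhat_lt_radius. Qed.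

Lemma abs_lam_divp : abs (lam / p%:R) = p%:R.
Proof.
have -> : lam = 1 + (lam - 1) by rewrite addrC subrK.
by rewrite absM abs_isosceles abs1 // mul1r absV abs_p invrK.
Qed.

Lemma abs_1subl_divp : abs (1 - lam / p%:R) = p%:R.
Proof. by rewrite addrC abs_isosceles absN abs_lam_divp // abs1 natp_gt1. Qed.

Lemma abs_Q_lt1 i : abs (Q i) < 1.
Proof.
apply: le_lt_trans c_lt1; apply: le_trans (Q_le_c i).
by rewrite ler_peMr ?exprn_ege1 ?(ltW rhat_gt1).
Qed.

Lemma qcoef0 : qcoef 0 = Q 0%N.
Proof. by rewrite /qcoef eq_sym (gtn_eqF (prime_gt0 p_prime)) !addr0. Qed.

Lemma qcoefE i : (p.+1 < i)%N -> qcoef i = Q i.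
Proof. by move=> pi; rewrite /qcoef (gtn_eqF pi) (gtn_eqF (ltnW pi)) !addr0. Qed.

Lemma abs_qcoef_lead : abs (qcoef p.+1) = p%:R.
Proof.
rewrite /qcoef eqxx (gtn_eqF (ltnSn p)) addr0 addrC abs_isosceles ?abs_1subl_divp //.
exact: lt_trans (abs_Q_lt1 _) natp_gt1.
Qed.

Lemma abs_qlead : abs qlead = image_radius.
Proof. by rewrite absM abs_qcoef_lead absX abs_x. Qed.

Lemma qlead_neq0 : qlead != 0.
Proof.
by apply/eqP => /abs_eq0; rewrite abs_qlead => /eqP; rewrite gt_eqF ?(lt_trans ltr01 radius_gt1).
Qed.

Lemma qcoef_le i : abs (qcoef i) * rhat ^+ i <= image_radius.
Proof.
have Q_le : abs (Q i) * rhat ^+ i <= image_radius.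
  exact: le_trans (Q_le_c i) (ltW (lt_trans c_lt1 radius_gt1)).
have [ip|pi|->] := ltngtP i p.+1; last by rewrite abs_qcoef_lead.
- rewrite /qcoef (ltn_eqF ip) addr0; case: eqP => [ip'|_]; last by rewrite addr0.
  rewrite (le_trans (ler_wpM2r _ (absD_max _ _))) ?exprn_ge0 ?(ltW rhat_gt0) //.
  rewrite maxr_pMl ?exprn_ge0 ?(ltW rhat_gt0) // ge_max Q_le abs_lam_divp /image_radius ip'.
  by rewrite ler_wpM2l ?ler_eXn2l ?(ltW (lt_trans ltr01 natp_gt1)).
- by rewrite qcoefE.
Qed.

Lemma Q_series_to u : abs u <= rhat -> series_to abs (fun i => Q i * u ^+ i) (pseval abs Q u).
Proof.
move=> u_le; have [s hs] : exists s, series_to abs (fun i => Q i * u ^+ i) s.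
  apply: series_exists => eps /Q_in_H [N hN]; exists N => i Ni.
  apply: le_lt_trans (hN i Ni); rewrite absM absX ler_wpM2l // lerXn2r ?nnegrE //.
  exact: le_trans (abs_ge0 u) u_le.
by rewrite (pseval_eq hs).
Qed.

Lemma Qstar_series_to u : abs u <= rhat ->
  series_to abs (fun i => qcoef i * u ^+ i) (Qstar abs p Q lam u).
Proof.
move=> u_le; pose v i := ((if i == p then lam / p%:R else 0)
  + (if i == p.+1 then 1 - lam / p%:R else 0)) * u ^+ i.
have -> : Qstar abs p Q lam u = \sum_(i < p.+2) v i + pseval abs Q u.
  rewrite /Qstar /Plam !big_ord_recr /= big1 => [|i _]; last first.
    by rewrite /v (ltn_eqF (ltn_ord i)) (ltn_eqF (leqW (ltn_ord i))) addr0 mul0r.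
  by rewrite add0r /v eqxx (ltn_eqF (ltnSn p)) (gtn_eqF (ltnSn p)) eqxx addr0 add0r.
apply: eq_series_to (series_toD (series_to_finite _) (Q_series_to u_le)) => [i|i pi].
  by rewrite /v /qcoef; ring.
by rewrite /v (gtn_eqF pi) (gtn_eqF (ltnW pi)) addr0 mul0r.
Qed.

Lemma Qstar_ball u : abs u <= rhat -> abs (Qstar abs p Q lam u - Q 0%N) <= image_radius.
Proof.
move=> u_le; have -> : Q 0%N = \sum_(i < 1) qcoef i * u ^+ i by rewrite big_ord1 expr0 mulr1 qcoef0.
apply: abs_series_tail_le (Qstar_series_to u_le) (ltW (lt_trans ltr01 radius_gt1)) _ => i _.
rewrite absM (le_trans _ (qcoef_le i)) // ler_wpM2l // absX lerXn2r ?nnegrE //.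
exact: le_trans (abs_ge0 u) u_le.
Qed.

Lemma abs_qnormal w' i :
  abs (qnormal w' i) = abs (qcoef i - (if i == 0%N then w' else 0)) * rhat ^+ i / image_radius.
Proof. by rewrite /qnormal !absM absX abs_x absV abs_qlead. Qed.

Lemma qnormal_distinguished w' : abs (w' - Q 0%N) <= image_radius ->
  distinguished p.+1 (qnormal w').
Proof.
move=> w'_near; have radius_gt0 : 0 < image_radius := lt_trans ltr01 radius_gt1.
have qnormalE i : (p.+1 < i)%N -> abs (qnormal w' i) = abs (Q i) * rhat ^+ i / image_radius.
  by move=> pi; rewrite abs_qnormal (gtn_eqF (ltn_trans (ltn0Sn p) pi)) subr0 qcoefE.
split.
- by rewrite /qnormal subr0 mulfV ?abs1 // qlead_neq0.
- move=> [|i] pi; rewrite abs_qnormal ler_pdivrMr // mul1r /=.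
    by rewrite expr0 mulr1 -absN opprB qcoef0.
  by rewrite subr0 qcoef_le.
- exists (c / image_radius); first by rewrite ltr_pdivrMr // mul1r (lt_trans c_lt1 radius_gt1).
  by move=> i pi; rewrite qnormalE // ler_pM2r ?invr_gt0.
- move=> eps eps_gt0; have [N hN] := Q_in_H (mulr_gt0 eps_gt0 radius_gt0).
  exists (maxn N p.+2) => i Ni; rewrite qnormalE ?ltr_pdivrMr ?hN //.
    exact: leq_trans (leq_maxl _ _) Ni.
  exact: leq_trans (leq_maxr _ _) Ni.
Qed.

Lemma Qstar_rescale w' t : abs t <= 1 ->
  Qstar abs p Q lam (x * t) - w' = qlead * pseval abs (qnormal w') t.
Proof.
move=> t1; have xt_le : abs (x * t) <= rhat by rewrite absM abs_x ler_piMr ?(ltW rhat_gt0).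
have w'_series : series_to abs (fun i => (if i == 0%N then w' else 0) * (x * t) ^+ i) w'.
  have := @series_to_finite (fun i => (if i == 0%N then w' else 0) * (x * t) ^+ i) 1.
  by rewrite big_ord1 /= expr0 mulr1; apply=> -[|i] //= _; rewrite mul0r.
have := series_toMl qlead^-1 (series_toD (Qstar_series_to xt_le) (series_toMl (-1) w'_series)).
move/(eq_series_to (v := fun i => qnormal w' i * t ^+ i)) => hs.
rewrite (pseval_eq (hs _)) ?mulN1r ?mulVKf ?qlead_neq0 // => i.
by rewrite /qnormal exprMn /=; field; rewrite qlead_neq0.
Qed.

Lemma Qlam_preimages w : abs (w - image_center) <= image_radius ->
  counts_preimages (fun z => abs z <= rhat) (Qlam abs p Q lam h) w p.+1.
Proof.
move=> w_near; rewrite -abs_x.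
have x_neq0 : x != 0 by apply/eqP => x0; move: rhat_gt0; rewrite -abs_x x0 abs0 ltxx.
apply: (counts_preimages_rescale (a := 1 - h) (g := pseval abs (qnormal (w + h - 1)))
  x_neq0 qlead_neq0).
- by rewrite abs_x -absN opprB.
- move=> z z_le; have ez : z - (1 - h) = z + h - 1 by ring.
  rewrite -Qstar_rescale; last first.
    by rewrite absM absV abs_x ler_pdivrMr ?rhat_gt0 // mul1r ez -abs_x -addrA absD_le // abs_x.
  by rewrite mulrC divfK // ez /Qlam /Qstar; ring.
apply/distinguished_counts_zeros/qnormal_distinguished.
by rewrite (_ : w + h - 1 - Q 0%N = w - image_center) // /image_center; ring.
Qed.

Lemma Qlam_image y : (exists z, abs z <= rhat /\ Qlam abs p Q lam h z = y) <->
  abs (y - image_center) <= image_radius.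
Proof.
split=> [[z [z_le <-]]|y_near]; last first.
  exact: counts_preimages_exists (Qlam_preimages y_near) (ltn0Sn p).
rewrite (_ : Qlam abs p Q lam h z - image_center = Qstar abs p Q lam (z + h - 1) - Q 0%N).
  by rewrite Qstar_ball // -addrA absD_le.
by rewrite /Qlam /Qstar /image_center; ring.
Qed.

Lemma abs_pseval_Q1_lt1 : abs (pseval abs Q 1) < 1.
Proof.
apply: le_lt_trans c_lt1; apply: abs_series_le (Q_series_to _) _ _ => [||i].
- by rewrite abs1 ltW.
- by apply: le_trans (Q_le_c 0%N); rewrite mulr_ge0 ?exprn_ge0 ?(ltW rhat_gt0).
- by rewrite expr1n mulr1 (le_trans _ (Q_le_c i)) // ler_peMr ?exprn_ege1 ?(ltW rhat_gt1).
Qed.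

Theorem Qlam_polynomial_like :
  (exists (c0 : K) (r : R),
    ((forall y, (exists z, abs z <= rhat /\ Qlam abs p Q lam h z = y) <-> abs (y - c0) <= r)
     \/ (forall y, (exists z, abs z <= rhat /\ Qlam abs p Q lam h z = y) <-> abs (y - c0) < r))
    /\ (forall z, abs z <= rhat -> exists z', abs z' <= rhat /\ Qlam abs p Q lam h z' = z)
    /\ (exists y, (exists z, abs z <= rhat /\ Qlam abs p Q lam h z = y) /\ rhat < abs y))
  /\ (forall w, (exists z, abs z <= rhat /\ Qlam abs p Q lam h z = w) ->
      counts_preimages (fun z => abs z <= rhat) (Qlam abs p Q lam h) w p.+1).
Proof.
split=> [|w /Qlam_image /Qlam_preimages //].
have center_le : abs image_center <= rhat.
  rewrite /image_center -addrA -opprB absB_le // ltW // (lt_trans (abs_Q_lt1 _)) //.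
exists image_center, image_radius; split; first by left; apply: Qlam_image.
split=> [z z_le|]; first by apply/Qlam_image; apply: le_trans (ltW rhat_lt_radius); apply: absB_le.
exists (image_center + qlead); split; first by apply/Qlam_image; rewrite addrC addKr abs_qlead.
by rewrite addrC abs_isosceles abs_qlead ?rhat_lt_radius // (le_lt_trans center_le rhat_lt_radius).
Qed.

End PolynomialLikeMap.

End Ultrametric.

Lemma rho_le1 (R : realType) p : (0 < p)%N -> rho R p <= 1.
Proof.
move=> p_gt0; rewrite /rho -[X in _ <= X](powRr0 (p%:R : R)).
by apply: ler_powR; rewrite ?ler1n // oppr_le0 invr_ge0 subr_ge0 ler1n.
Qed.

Theorem proposition3p6 (R : realType) (K : closedFieldType) (abs : K -> R)
  (p : nat) (rhat : R) (Q : nat -> K) :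
  prime p ->
  is_Cp abs p ->
  (exists x : K, x != 0 /\ abs x = rhat) -> 1 < rhat ->
  in_H abs rhat Q ->
  (exists c : R, c < rho R p /\ forall i, abs (Q i) * rhat ^+ i <= c) ->
  forall lam h : K,
    abs (lam - 1) < 1 ->
    abs (h - 1) <= abs (pseval abs Q 1) / p%:R ->
    Qstar abs p Q lam h = h ->
    (* Q_lambda(B) is a ball strictly containing B *)
    (exists (c : K) (r : R),
       ((forall y, (exists z, abs z <= rhat /\ Qlam abs p Q lam h z = y) <-> abs (y - c) <= r)
        \/ (forall y, (exists z, abs z <= rhat /\ Qlam abs p Q lam h z = y) <-> abs (y - c) < r))
       /\ (forall z, abs z <= rhat -> exists z', abs z' <= rhat /\ Qlam abs p Q lam h z' = z)
       /\ (exists y, (exists z, abs z <= rhat /\ Qlam abs p Q lam h z = y) /\ rhat < abs y))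
    /\
    (* every w in Q_lambda(B) has exactly p+1 preimages in B, with multiplicity *)
    (forall w, (exists z, abs z <= rhat /\ Qlam abs p Q lam h z = w) ->
       exists s : seq K, uniq s /\
         (forall z, (abs z <= rhat /\ Qlam abs p Q lam h z = w) <-> z \in s) /\
         exists m : K -> nat,
           (forall z, z \in s -> mult_at abs (fun x => Qlam abs p Q lam h x - w) z (m z)) /\
           (\sum_(z <- s) m z)%N = p.+1).
Proof.
move=> p_prime [abs_ge0 [abs_eq0 [absM [absD_max [abs_p [complete _]]]]]] [x [_ abs_x]].
move=> rhat_gt1 Q_in_H [c [c_lt_rho Q_le_c]] lam h lam_near1 h_near _.
have c_lt1 : c < 1 := lt_le_trans c_lt_rho (rho_le1 R (prime_gt0 p_prime)).
have h_near1 : abs (h - 1) <= rhat.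
  apply: le_trans h_near (le_trans _ (ltW rhat_gt1)).
  by rewrite ler_pdivrMr ?ltr0n ?prime_gt0 // (le_trans (ltW (abs_pseval_Q1_lt1 abs_ge0 abs_eq0
    absM absD_max complete rhat_gt1 Q_in_H c_lt1 Q_le_c))) // mul1r ler1n prime_gt0.
exact (Qlam_polynomial_like abs_ge0 abs_eq0 absM absD_max complete p_prime abs_p abs_x
  rhat_gt1 Q_in_H c_lt1 Q_le_c lam_near1 h_near1).
Qed.
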